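(* Let $V=\mathbb R^{p,q}$, $p=p'+p''$ with $p'\equiv3\pmod4$, $W$ a $C\ell^0(V)$-module, $\Pi:\wedge^2W\to V$ an $\mathfrak o(V)$-equivariant linear map, and $b=b(\Pi)$. Then there exist integers $l,m\ge0$ and a $b$-orthogonal direct sum decomposition $W=\bigoplus_{i=0}^{l+m}W_i$ into $C\ell^0(V)$-submodules such that: (1) $\Pi(W_0\wedge W)=0$, $\Pi(W_i\wedge W_j)=0$ for $i\ne j$, and $\Pi(\wedge^2W_i)=V$ for $i=1,\dots,l$; (2) $W_0=\ker b$ and $b|_{W_i\times W_i}$ is nondegenerate for all $i\ge1$; (3) for $i=1,\dots,l$ the module $W_i$ is irreducible, and for $j=l+1,\dots,l+m$ the module $W_j=X_j\oplus X'_j$ is the direct sum of two irreducible $b$-isotropic $C\ell^0(V)$-submodules; (4) the restriction of $b$ to any irreducible $C\ell^0(V)$-submodule of $X=\bigoplus_{j=l+1}^{l+m}W_j$ vanishes.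
   Context: Let $V=\mathbb{R}^{p,q}$ be $\mathbb R^{p+q}$ with the scalar product $\langle x,y\rangle=\sum_{i=1}^{p}x^iy^i-\sum_{j=p+1}^{p+q}x^jy^j$ and its standard orthonormal basis. The Clifford algebra $C\ell(V)$ is generated by $V$ subject to $xy+yx=-2\langle x,y\rangle 1$, with even part $C\ell^0(V)$. Identify $\mathfrak{o}(V)=\wedge^2V$ via $(x\wedge y)(z)=\langle y,z\rangle x-\langle x,z\rangle y$; the map $x\wedge y\mapsto-\frac14(xy-yx)$ is a Lie algebra isomorphism of $\mathfrak o(V)$ onto $\mathfrak{spin}(V)\subset C\ell^0(V)$, and via it $\mathfrak o(V)$ acts on any $C\ell^0(V)$-module $W$. Fix $p=p'+p''$ with $p'\equiv 3\pmod 4$; $e_1,\dots,e_{p'}$ are the first $p'$ standard basis vectors, and $b(s,t)=\langle e_1,\Pi(e_2\cdots e_{p'}s\wedge t)\rangle$ for $s,t\in W$ (Clifford product acting on $W$); by a result of the paper $b$ is symmetric. A subspace is $b$-isotropic if $b$ vanishes on it. *)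

From HB Require Import structures.
From mathcomp Require Import all_boot all_order all_algebra.
From mathcomp Require Export reals.
Set Implicit Arguments. Unset Strict Implicit. Unset Printing Implicit Defensive.
Import GRing.Theory Num.Theory.
Local Open Scope ring_scope.

(* V = R^{p,q} = 'rV[R]_n, n = p + q, standard orthonormal basis e_0..e_{n-1}
   (0-indexed); <e_i,e_i> = eps p i = 1 if i < p, -1 otherwise. *)
Definition eps {R : nzRingType} (p : nat) {n : nat} (i : 'I_n) : R :=
  if (i < p)%N then 1 else -1.

Definition ip {R : comNzRingType} (p : nat) {n : nat} (x y : 'rV[R]_n) : R :=
  \sum_(i < n) eps p i * x 0 i * y 0 i.

(* the basis vector e_1 of the paper (index 0 here) *)
Definition e_first {R : nzRingType} {n : nat} : 'rV[R]_n :=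
  \row_(j < n) ((val j == 0%N)%:R).

Definition symd {T : finType} (A B : {set T}) : {set T} := (A :\: B) :|: (B :\: A).

Definition even_set {T : finType} (A : {set T}) : bool := ~~ odd #|A|.

(* Clifford basis e_A = e_{a1} ... e_{ak} (a1 < ... < ak);
   e_A e_B = clsign A B * e_{A symd B}, using x y + y x = -2<x,y>,
   so e_i e_i = - eps i and e_i e_j = - e_j e_i for i <> j. *)
Definition clsign {R : nzRingType} (p : nat) {n : nat} (A B : {set 'I_n}) : R :=
  (-1) ^+ #|[set ab : 'I_n * 'I_n | (ab.1 \in A) && (ab.2 \in B) && (ab.2 < ab.1)%N]|
  * \prod_(i in A :&: B) (- eps p i).

(* A (left) Cl^0(V)-module structure on vT: rho A is the action of the basis
   element e_A of Cl^0(V) (A even); this is a unital algebra morphism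
   Cl^0(V) -> End(vT) written on the basis. (Values on odd sets are unused.) *)
Definition is_Cl0_module {R : fieldType} (p : nat) {n : nat} {vT : vectType R}
  (rho : {set 'I_n} -> vT -> vT) : Prop :=
  [/\ forall A, even_set A -> forall (a : R) (u v : vT),
        rho A (a *: u + v) = a *: rho A u + rho A v,
      forall v, rho set0 v = v &
      forall A B, even_set A -> even_set B -> forall v,
        rho A (rho B v) = clsign p A B *: rho (symd A B) v].

Definition cl2 {R : fieldType} (p : nat) {n : nat} {vT : vectType R}
  (rho : {set 'I_n} -> vT -> vT) (i j : 'I_n) (v : vT) : vT :=
  clsign p [set i] [set j] *: rho (symd [set i] [set j]) v.

(* action of x /\ y in o(V) on W via x /\ y |-> -1/4 (xy - yx) *)
Definition spin_act {R : fieldType} (p : nat) {n : nat} {vT : vectType R}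
  (rho : {set 'I_n} -> vT -> vT) (x y : 'rV[R]_n) (v : vT) : vT :=
  (- (4%:R)^-1) *: \sum_(i < n) \sum_(j < n)
      (x 0 i * y 0 j) *: (cl2 p rho i j v - cl2 p rho j i v).

Definition oV_act {R : comNzRingType} (p : nat) {n : nat} (x y z : 'rV[R]_n)
  : 'rV[R]_n := ip p y z *: x - ip p x z *: y.

(* Pi : wedge^2 W -> V linear, written as an alternating bilinear map,
   and o(V)-equivariant (checked on decomposable x /\ y, which span o(V)). *)
Definition is_equivariant_Pi {R : fieldType} (p : nat) {n : nat} {vT : vectType R}
  (rho : {set 'I_n} -> vT -> vT) (Pi : vT -> vT -> 'rV[R]_n) : Prop :=
  [/\ forall (a : R) s s' t, Pi (a *: s + s') t = a *: Pi s t + Pi s' t,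
      forall (a : R) s t t', Pi s (a *: t + t') = a *: Pi s t + Pi s t',
      forall s, Pi s s = 0 &
      forall x y s t, Pi (spin_act p rho x y s) t + Pi s (spin_act p rho x y t)
                      = oV_act p x y (Pi s t)].

(* b(s,t) = < e_1, Pi(e_2 ... e_{p'} s /\ t) > *)
Definition bform {R : fieldType} (p' p : nat) {n : nat} {vT : vectType R}
  (rho : {set 'I_n} -> vT -> vT) (Pi : vT -> vT -> 'rV[R]_n) (s t : vT) : R :=
  ip p e_first (Pi (rho [set j : 'I_n | (0 < val j < p')%N] s) t).

Definition submodule {R : fieldType} {n : nat} {vT : vectType R}
  (rho : {set 'I_n} -> vT -> vT) (U : {vspace vT}) : Prop :=
  forall A, even_set A -> forall u, u \in U -> rho A u \in U.

Definition irreducible {R : fieldType} {n : nat} {vT : vectType R}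
  (rho : {set 'I_n} -> vT -> vT) (U : {vspace vT}) : Prop :=
  [/\ submodule rho U, U != 0%VS &
      forall U' : {vspace vT}, submodule rho U' -> (U' <= U)%VS ->
        U' = 0%VS \/ U' = U].

Definition isotropic {R : fieldType} {vT : vectType R}
  (b : vT -> vT -> R) (U : {vspace vT}) : Prop :=
  forall s t, s \in U -> t \in U -> b s t = 0.

(* The form b is symmetric, and by the o(V)-equivariance of Pi every basis
   element e_A of Cl^0(V) is self-adjoint for b up to a nonzero scalar; the
   hypothesis p' = 3 mod 4 enters because e_2 ... e_p' is then skew-adjoint
   for the first coordinate of Pi.  Hence b-orthogonals of submodules are
   submodules, and as Cl^0(V)-modules are completely reducible (average a
   projection over the e_A), W is the radical ker b plus a nondegenerate
   submodule N.  From N one peels off, one at a time, irreducible submodules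
   on which b does not vanish: they are nondegenerate and mutually orthogonal.
   In what remains every irreducible S is isotropic, and a module complement C
   of the b-orthogonal of S is paired with S by b, so S + C is hyperbolic.
   Finally each coordinate of Pi(s, t) is a value of b at (e_B s, t), so Pi
   vanishes against ker b and between orthogonal submodules, while on a
   nondegenerate W_i a single value b(s, t) <> 0 is spread by the
   equivariance to all of V. *)

From HB Require Import structures.
From mathcomp Require Import all_boot all_order all_algebra.
From mathcomp Require Import reals.
From mathcomp Require Import ring zify.
From Stdlib Require Import Classical.
Import GRing.Theory Num.Theory.
Local Open Scope ring_scope.
Set Implicit Arguments. Unset Strict Implicit. Unset Printing Implicit Defensive.

Section SymmetricFormDecomposition.
Variables (R : fieldType) (n : nat) (vT : vectType R).
Variables (rho : {set 'I_n} -> vT -> vT) (b : {symmetric vT}).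
Hypothesis rhoD : forall A, even_set A -> {morph rho A : u v / u + v}.
Hypothesis b_invariant : forall A, even_set A ->
  exists nu : R, forall s t, b s (rho A t) = nu * b (rho A s) t.

Implicit Types (U V X H N : {vspace vT}).

Lemma formC s t : b s t = b t s.
Proof. by rewrite hermC expr0 mul1r. Qed.

Lemma capv_eq0 U V : (forall x, x \in U -> x \in V -> x = 0) -> (U :&: V = 0)%VS.
Proof.
move=> UV0; apply/eqP; rewrite -subv0; apply/subvP => x /memv_capP[xU xV].
by rewrite (UV0 x xU xV) mem0v.
Qed.

Lemma orthov_addv U V : orthov b (U + V) = (orthov b U :&: orthov b V)%VS.
Proof.
apply/vspaceP => x; rewrite memv_cap; apply/mem_orthovP/andP.
  move=> xUV; split; apply/mem_orthovP => y yW; apply: xUV.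
    exact: subvP (addvSl U V) _ yW.
  exact: subvP (addvSr U V) _ yW.
case=> /mem_orthovP xU /mem_orthovP xV _ /memv_addP[u uU [v vV ->]].
by rewrite linearDr /= xU ?xV ?addr0.
Qed.

Lemma dimv_cap_orthov V U : (\dim V <= \dim (V :&: orthov b U) + \dim U)%N.
Proof.
suff: forall us, (\dim V <= \dim (V :&: orthov b <<us>>) + size us)%N.
  by move/(_ (vbasis U)); rewrite (span_basis (vbasisP U)) size_tuple.
elim=> [|u us IH]; first by rewrite span_nil orthov0 capvf addn0.
have h := leq_dim_orthov1 b u (V :&: orthov b <<us>>).
rewrite -capvA [(orthov b <<us>> :&: _)%VS]capvC capvA in h.
rewrite span_cons orthov_addv capvA /=; lia.
Qed.

Lemma submodule_cap U V :
  submodule rho U -> submodule rho V -> submodule rho (U :&: V).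
Proof. by move=> sU sV A eA u /memv_capP[uU uV]; rewrite memv_cap sU ?sV. Qed.

Lemma submodule_add U V :
  submodule rho U -> submodule rho V -> submodule rho (U + V).
Proof.
by move=> sU sV A eA _ /memv_addP[u uU [v vV ->]]; rewrite rhoD // memv_add ?sU ?sV.
Qed.

Lemma submodule_orthov X : submodule rho X -> submodule rho (orthov b X).
Proof.
move=> sX A eA t /mem_orthovP tX; apply/mem_orthovP => x xX.
have [nu Hnu] := b_invariant eA.
by rewrite formC Hnu formC tX ?mulr0 ?sX.
Qed.

Definition nondegv X := (X :&: orthov b X = 0)%VS.

Lemma nondegv_eq0 X x :
  nondegv X -> x \in X -> {in X, forall y, b x y = 0} -> x = 0.
Proof. by move=> nX xX /mem_orthovP xo; apply/eqP; rewrite -memv0 -nX memv_cap xX. Qed.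

Lemma nondegvP X x :
  nondegv X -> x \in X -> x != 0 -> exists2 y, y \in X & b x y != 0.
Proof.
move=> nX xX nx; apply/mem_orthovPn; apply: contra nx => xo.
by rewrite -memv0 -nX memv_cap xX.
Qed.

Lemma dimv_leq_pairing X (Y : {vspace vT}) :
  (forall x, x \in X -> x != 0 -> exists2 y, y \in Y & b x y != 0) ->
  (\dim X <= \dim Y)%N.
Proof.
move=> pairXY; have := dimv_cap_orthov X Y.
suff -> : (X :&: orthov b Y = 0)%VS by rewrite dimv0.
apply: capv_eq0 => x xX /mem_orthovP xY; apply/eqP; apply: contraT => nx.
by have [y yY] := pairXY x xX nx; rewrite xY ?eqxx.
Qed.

Lemma orth_complement_sum H N : (H <= N)%VS -> nondegv H ->
  (H + (N :&: orthov b H) = N)%VS /\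
  (\dim H + \dim (N :&: orthov b H) = \dim N)%N.
Proof.
move=> HN nH; set K := (N :&: orthov b H)%VS.
have dimHK : \dim (H + K) = (\dim H + \dim K)%N.
  by rewrite -dimv_sum_cap capvA (capv_idPl HN) nH dimv0 addn0.
have HKN : (H + K <= N)%VS by rewrite subv_add HN capvSl.
have eqN : (H + K)%VS = N.
  apply/eqP; rewrite eqEdim HKN dimHK addnC; exact: dimv_cap_orthov.
by rewrite -dimHK eqN.
Qed.

Lemma nondegv_orth_complement H N : (H <= N)%VS -> nondegv H -> nondegv N ->
  nondegv (N :&: orthov b H).
Proof.
move=> HN nH nN; apply: capv_eq0 => x /memv_capP[xN /mem_orthovP xH] /mem_orthovP xK.
apply: (nondegv_eq0 nN xN) => y; rewrite -(orth_complement_sum HN nH).1.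
by case/memv_addP=> [h hH [k kK ->]]; rewrite linearDr /= xH ?xK ?addr0.
Qed.

Lemma irreducible_subv N : submodule rho N -> N != 0%VS ->
  exists2 S, irreducible rho S & (S <= N)%VS.
Proof.
have [k] := ubnP (\dim N); elim: k N => // k IH N ltNk sN nN.
have [iN | niN] := classic (irreducible rho N); first by exists N.
have [U [sU UN U0 UNe]] :
    exists U, [/\ submodule rho U, (U <= N)%VS, U != 0%VS & U != N].
  apply: NNPP => noU; apply: niN; split => // U sU UN.
  case: (eqVneq U 0%VS) => [|U0]; [by left | right].
  by apply: NNPP => UNe; apply: noU; exists U; split => //; apply/eqP.
have ltUN : (\dim U < \dim N)%N.
  rewrite ltn_neqAle (dimvS UN) andbT; apply: contra UNe => /eqP dUN.
  by rewrite eqEdim dUN leqnn andbT.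
have [S iS SU] := IH U (leq_trans ltUN ltNk) sU U0.
by exists S => //; apply: subv_trans UN.
Qed.

Lemma nondegv_irreducible S : irreducible rho S -> ~ isotropic b S -> nondegv S.
Proof.
case=> sS _ minS nisoS.
have [//|SSo] := minS _ (submodule_cap sS (submodule_orthov sS)) (capvSl _ _).
case: nisoS => s t sS'; rewrite -SSo => /memv_capP[_ /mem_orthovP tSo].
by rewrite formC tSo.
Qed.

Definition irreducibles_isotropic N :=
  forall U, irreducible rho U -> (U <= N)%VS -> isotropic b U.

Definition orth_decomp (L : seq {vspace vT}) :=
  (forall i, (i < size L)%N ->
     submodule rho (nth 0%VS L i) /\ nondegv (nth 0%VS L i)) /\
  (forall i j, (i < size L)%N -> (j < size L)%N -> i != j ->
     forall s t, s \in nth 0%VS L i -> t \in nth 0%VS L j -> b s t = 0).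

Lemma nth_subv_sum (L : seq {vspace vT}) i : (i < size L)%N ->
  (nth 0%VS L i <= \sum_(X <- L) X)%VS.
Proof.
elim: L i => // X L IH [|i] /=; rewrite big_cons; first by rewrite addvSl.
by move=> ltiL; apply: subv_trans (IH i ltiL) (addvSr _ _).
Qed.

Lemma orth_decomp_cons X L N : orth_decomp L -> (\sum_(Y <- L) Y <= N)%VS ->
  submodule rho X -> nondegv X ->
  (forall s t, s \in X -> t \in N -> b s t = 0) -> orth_decomp (X :: L).
Proof.
move=> [decL orthL] LN sX nX XN; split; first by case=> [|i] //= /decL.
have inN j t : (j < size L)%N -> t \in nth 0%VS L j -> t \in N.
  by move=> ltj /(subvP (nth_subv_sum ltj)); apply: subvP.
case=> [|i] [|j] //= lti ltj ij s t si tj.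
- exact: XN si (inN _ _ ltj tj).
- by rewrite formC; apply: XN tj (inN _ _ lti si).
- exact: orthL si tj.
Qed.

Lemma nondeg_irreducible_decomp N : submodule rho N -> nondegv N ->
  exists Ss N1,
  [/\ orth_decomp Ss, forall i, (i < size Ss)%N -> irreducible rho (nth 0%VS Ss i),
      (\sum_(X <- Ss) X + N1)%VS = N,
      [/\ submodule rho N1, nondegv N1 & irreducibles_isotropic N1] &
      forall i, (i < size Ss)%N ->
        forall s t, s \in nth 0%VS Ss i -> t \in N1 -> b s t = 0].
Proof.
have [k] := ubnP (\dim N); elim: k N => // k IH N ltNk sN nN.
have [[S [iS SN] nisoS] | isoN] :=
  classic (exists2 S, irreducible rho S /\ (S <= N)%VS & ~ isotropic b S); last first.
  exists [::], N; split => //; first by rewrite big_nil add0v.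
  split => // U iU UN; apply: NNPP => nisoU; apply: isoN; exists U => //.
have nS := nondegv_irreducible iS nisoS.
have sS : submodule rho S by case: iS.
set K := (N :&: orthov b S)%VS.
have [_ dimSK] := orth_complement_sum SN nS.
have ltKk : (\dim K < k)%N.
  have : \dim S != 0%N by rewrite dimv_eq0; case: iS.
  by move: ltNk; rewrite -dimSK -/K; lia.
have [Ss [N1 [decSs iSs sumSs [sN1 nN1 isoN1] orthN1]]] :=
  IH K ltKk (submodule_cap sN (submodule_orthov sS)) (nondegv_orth_complement SN nS nN).
have orthSK s t : s \in S -> t \in K -> b s t = 0.
  by move=> sS'; rewrite formC => /memv_capP[_ /mem_orthovP ->].
exists (S :: Ss), N1; split => //.
- by apply: orth_decomp_cons decSs _ sS nS orthSK; rewrite -sumSs addvSl.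
- by case=> [|i] //= /iSs.
- by rewrite big_cons -addvA sumSs (orth_complement_sum SN nS).1.
case=> [|i] /= lti s t si tN1; last exact: orthN1 si tN1.
by apply: orthSK si _; rewrite -sumSs; apply: subvP (addvSr _ _) _ tN1.
Qed.

Section DualPair.
Variables S C : {vspace vT}.
Hypothesis pairCS : forall c, c \in C -> c != 0 -> exists2 s, s \in S & b c s != 0.
Hypothesis pairSC : forall s, s \in S -> s != 0 -> exists2 c, c \in C & b s c != 0.

Lemma irreducible_dual : irreducible rho S -> submodule rho C -> irreducible rho C.
Proof.
case=> sS S0 minS sC; split => // [|C1 sC1 C1C].
  apply/negP => /eqP C0; move: S0; rewrite -vpick0 => nzS.
  by have [c] := pairSC (memv_pick S) nzS; rewrite C0 memv0 => /eqP ->; rewrite linear0r eqxx.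
case: (eqVneq C1 0%VS) => [|nzC1]; [by left | right].
have [SC1|] := minS _ (submodule_cap sS (submodule_orthov sC1)) (capvSl _ _).
  apply/eqP; rewrite eqEdim C1C; apply: leq_trans (dimv_leq_pairing pairCS) _.
  apply: dimv_leq_pairing => s sS' nzs; apply/mem_orthovPn; apply: contra nzs => sC1'.
  by rewrite -memv0 -SC1 memv_cap sS'.
move=> SC1; rewrite -vpick0 in nzC1.
have [s sS' /negP[]] := pairCS (subvP C1C _ (memv_pick C1)) nzC1.
move: sS'; rewrite -SC1 => /memv_capP[_ /mem_orthovP sC1o].
by rewrite formC sC1o ?memv_pick.
Qed.

Hypotheses (isoS : isotropic b S) (isoC : isotropic b C).

Lemma capv_dual_pair : (S :&: C = 0)%VS.
Proof.
apply: capv_eq0 => x xS xC; apply/eqP; apply: contraT => nzx.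
by have [s sS'] := pairCS xC nzx; rewrite formC isoS ?eqxx.
Qed.

Lemma nondegv_dual_pair : nondegv (S + C).
Proof.
apply: capv_eq0 => _ /memv_addP[s sS' [c cC ->]] /mem_orthovP orthx.
have orthc : {in S, forall y, b c y = 0}.
  move=> y yS; have := orthx y (subvP (addvSl S C) _ yS).
  by rewrite linearDl /= (isoS sS' yS) add0r.
have orths : {in C, forall y, b s y = 0}.
  move=> y yC; have := orthx y (subvP (addvSr S C) _ yC).
  by rewrite linearDl /= (isoC cC yC) addr0.
have c0 : c = 0.
  apply/eqP; apply: contraT => nzc; have [y yS] := pairCS cC nzc.
  by rewrite orthc ?eqxx.
have s0 : s = 0.
  apply/eqP; apply: contraT => nzs; have [y yC] := pairSC sS' nzs.
  by rewrite orths ?eqxx.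
by rewrite s0 c0 addr0.
Qed.

End DualPair.

Hypothesis complete_reducibility : forall U M,
  submodule rho U -> submodule rho M -> (U <= M)%VS ->
  exists U', [/\ submodule rho U', (U + U')%VS = M & (U :&: U')%VS = 0%VS].

Definition hyperbolic H := exists X X' : {vspace vT},
  [/\ irreducible rho X, irreducible rho X', isotropic b X & isotropic b X'] /\
  (X + X')%VS = H /\ (X :&: X')%VS = 0%VS.

Lemma hyperbolic_subv N : submodule rho N -> nondegv N ->
  irreducibles_isotropic N -> N != 0%VS ->
  exists H, [/\ (H <= N)%VS, submodule rho H, nondegv H, hyperbolic H & H != 0%VS].
Proof.
move=> sN nN isoN nzN.
have [S iS SN] := irreducible_subv sN nzN.
have [sS nzS _] := iS; have isoS := isoN S iS SN.
set K := (N :&: orthov b S)%VS.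
have [C [sC KC KC0]] :=
  complete_reducibility (submodule_cap sN (submodule_orthov sS)) sN (capvSl _ _).
have CN : (C <= N)%VS by rewrite -KC addvSr.
have pairCS c : c \in C -> c != 0 -> exists2 s, s \in S & b c s != 0.
  move=> cC nzc; apply/mem_orthovPn; apply: contra nzc => cSo.
  by rewrite -memv0 -KC0 memv_cap cC andbT memv_cap cSo (subvP CN).
have pairSC s : s \in S -> s != 0 -> exists2 c, c \in C & b s c != 0.
  move=> sS' nzs; have [y] := nondegvP nN (subvP SN _ sS') nzs.
  rewrite -KC => /memv_addP[k /memv_capP[_ /mem_orthovP kSo] [c cC ->]].
  by rewrite linearDr /= formC kSo // add0r; exists c.
have iC := irreducible_dual pairCS pairSC iS sC.
have isoC := isoN C iC CN.
exists (S + C)%VS; split.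
- by rewrite subv_add SN CN.
- exact: submodule_add.
- exact: nondegv_dual_pair pairCS pairSC isoS isoC.
- by exists S, C; split; [split | split; last exact: capv_dual_pair pairCS isoS].
by apply: contraNneq nzS => SC0; rewrite -subv0 -SC0 addvSl.
Qed.

Lemma hyperbolic_decomp N : submodule rho N -> nondegv N ->
  irreducibles_isotropic N -> exists Hs : seq {vspace vT},
  [/\ orth_decomp Hs, forall i, (i < size Hs)%N -> hyperbolic (nth 0%VS Hs i) &
      (\sum_(X <- Hs) X)%VS = N].
Proof.
have [k] := ubnP (\dim N); elim: k N => // k IH N ltNk sN nN isoN.
have [->|nzN] := eqVneq N 0%VS; first by exists [::]; split; rewrite ?big_nil.
have [H [HN sH nH hypH nzH]] := hyperbolic_subv sN nN isoN nzN.
set K := (N :&: orthov b H)%VS.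
have [sumHK dimHK] := orth_complement_sum HN nH.
have ltKk : (\dim K < k)%N.
  have : \dim H != 0%N by rewrite dimv_eq0.
  by move: ltNk; rewrite -dimHK -/K; lia.
have isoK : irreducibles_isotropic K.
  by move=> U iU UK; apply: isoN iU (subv_trans UK (capvSl _ _)).
have [Hs [decHs hypHs sumHs]] :=
  IH K ltKk (submodule_cap sN (submodule_orthov sH))
    (nondegv_orth_complement HN nH nN) isoK.
exists (H :: Hs); split.
- apply: orth_decomp_cons decHs _ sH nH _; first by rewrite sumHs.
  by move=> s t sH'; rewrite formC => /memv_capP[_ /mem_orthovP ->].
- by case=> [|i] //= /hypHs.
- by rewrite big_cons sumHs.
Qed.

Lemma orth_decomp_cat (L1 L2 : seq {vspace vT}) N :
  orth_decomp L1 -> orth_decomp L2 -> (\sum_(X <- L2) X <= N)%VS ->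
  (forall i, (i < size L1)%N ->
     forall s t, s \in nth 0%VS L1 i -> t \in N -> b s t = 0) ->
  orth_decomp (L1 ++ L2).
Proof.
move=> [decL1 orthL1] [decL2 orthL2] L2N orthL1N.
have shift i : (size L1 <= i)%N -> (i < size (L1 ++ L2))%N -> (i - size L1 < size L2)%N.
  by rewrite size_cat; lia.
have inN i t : (size L1 <= i)%N -> (i < size (L1 ++ L2))%N ->
    t \in nth 0%VS (L1 ++ L2) i -> t \in N.
  move=> L1i iL; rewrite nth_cat ltnNge L1i => /(subvP (nth_subv_sum (shift i L1i iL))).
  exact: subvP.
split=> [i iL | i j iL jL ij s t].
  rewrite nth_cat; case: ifP => [/decL1 // | /negbT].
  by rewrite -leqNgt => /shift/(_ iL)/decL2.
case: (ltnP i (size L1)) => [iL1|L1i]; case: (ltnP j (size L1)) => [jL1|L1j].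
- by rewrite !nth_cat iL1 jL1; exact: (orthL1 i j).
- by rewrite nth_cat iL1 => si /(inN j t L1j jL); exact: (orthL1N i iL1 s t si).
- rewrite formC [nth _ _ j]nth_cat jL1 => /(inN i s L1i iL) sN tj.
  exact: (orthL1N j jL1 t s tj sN).
rewrite !nth_cat ltnNge L1i ltnNge L1j /=; apply: orthL2; rewrite ?shift //.
by apply: contra ij => /eqP ij'; apply/eqP; rewrite -(subnK L1i) -(subnK L1j) ij'.
Qed.

Lemma directv_orth_family (W : nat -> {vspace vT}) k :
  (forall i j, (i <= k)%N -> (j <= k)%N -> i != j ->
     forall s t, s \in W i -> t \in W j -> b s t = 0) ->
  (forall i, (1 <= i <= k)%N -> nondegv (W i)) ->
  directv (\sum_(i < k.+1) W i).
Proof.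
move=> orthW nW; apply/directv_sum_independent => us usW sum0.
have le_k (h : 'I_k.+1) : (h <= k)%N by rewrite -ltnS.
have others0 (i : 'I_k.+1) : i != ord0 -> us i = 0.
  move=> nz_i; apply: (nondegv_eq0 (nW i _) (usW i isT)) => [|y yW].
    by rewrite lt0n -ltnS ltn_ord andbT; apply: contra nz_i => /eqP i0; apply/eqP/val_inj.
  have := congr1 (b^~ y) sum0; rewrite linear_sumlz linear0l (bigD1 i) //= big1 ?addr0 //.
  by move=> j ji; apply: (orthW j i (le_k j) (le_k i) ji _ _ (usW j isT) yW).
move=> i _; have [->|] := eqVneq i ord0; last exact: others0.
by move: sum0; rewrite (bigD1 ord0) //= big1 ?addr0 // => j; apply: others0.
Qed.

Lemma radical_complement : exists2 N0, submodule rho N0 /\ nondegv N0 &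
  (orthov b fullv + N0)%VS = fullv.
Proof.
have sF : submodule rho fullv by move=> *; rewrite memvf.
have [N0 [sN0 sumN0 capN0]] :=
  complete_reducibility (submodule_orthov sF) sF (subvf _).
exists N0 => //; split => //; apply: capv_eq0 => x xN0 /mem_orthovP xo.
apply/eqP; rewrite -memv0 -capN0 memv_cap xN0 andbT.
apply/mem_orthovP => t _; move: (memvf t); rewrite -sumN0.
case/memv_addP=> [u /mem_orthovP uo [v vN0 ->]].
by rewrite linearDr /= formC uo ?memvf // xo ?addr0.
Qed.

Lemma orth_module_decomposition : exists (l m : nat) (W : nat -> {vspace vT}),
    [/\ (\sum_(i < (l + m).+1) W i)%VS = fullv,
        directv (\sum_(i < (l + m).+1) W i),
        (forall i, (i <= l + m)%N -> submodule rho (W i)) &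
        (forall i j, (i <= l + m)%N -> (j <= l + m)%N -> i != j ->
           forall s t, s \in W i -> t \in W j -> b s t = 0)] /\
    [/\ (forall s, s \in W 0%N <-> (forall t, b s t = 0)) &
        (forall i, (1 <= i <= l + m)%N -> forall s, s \in W i ->
           (forall t, t \in W i -> b s t = 0) -> s = 0)] /\
    [/\ (forall i, (1 <= i <= l)%N -> irreducible rho (W i)) &
        (forall j, (l < j <= l + m)%N -> hyperbolic (W j))] /\
    (forall U : {vspace vT}, irreducible rho U ->
       (U <= \sum_(l.+1 <= j < (l + m).+1) W j)%VS -> isotropic b U).
Proof.
have [N0 [sN0 nN0] sumN0] := radical_complement.
have [Ss [N1 [decSs iSs sumSs [sN1 nN1 isoN1] orthN1]]] :=
  nondeg_irreducible_decomp sN0 nN0.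
have [Hs [decHs hypHs sumHs]] := hyperbolic_decomp sN1 nN1 isoN1.
set L := Ss ++ Hs.
have [decL orthL] : orth_decomp L by apply: orth_decomp_cat; rewrite ?sumHs.
pose W i := if i is i'.+1 then nth 0%VS L i' else orthov b fullv.
have W0P s : s \in W 0%N <-> forall t, b s t = 0.
  by split=> [/mem_orthovP so t | so]; [rewrite so ?memvf | apply/mem_orthovP].
have HsW j : (size Ss < j <= size Ss + size Hs)%N ->
    W j = nth 0%VS Hs (j.-1 - size Ss).
  by case: j => //= j /andP[Sj _]; rewrite /L nth_cat ltnNge -ltnS Sj.
have orthW i j : (i <= size Ss + size Hs)%N -> (j <= size Ss + size Hs)%N ->
    i != j -> forall s t, s \in W i -> t \in W j -> b s t = 0.
  case: i j => [|i] [|j] //= iL jL ij s t; rewrite -?(size_cat Ss Hs) in iL jL.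
  - by move=> /W0P ->.
  - by move=> _ /W0P to; rewrite formC.
  - exact: orthL.
exists (size Ss), (size Hs), W; split; [split=> // | split; [split=> // | split]].
- have sumL : (\sum_(i < size L) W (bump 0 i) = \sum_(X <- L) X)%VS.
    by rewrite (big_nth 0%VS) big_mkord.
  by rewrite big_ord_recl -size_cat sumL big_cat /= sumHs sumSs.
- apply: directv_orth_family orthW _ => -[|i] //= iL.
  by case: (decL i); rewrite ?size_cat.
- case=> [_|i iL]; first by apply: submodule_orthov => ? ? ? _; rewrite memvf.
  by case: (decL i); rewrite ?size_cat.
- case=> [|i] //= iL s si so; apply: (nondegv_eq0 _ si so).
  by case: (decL i); rewrite ?size_cat.
- split=> [[|i] //= iL | j jL]; first by rewrite /L nth_cat iL; apply: iSs.
  by rewrite HsW //; apply: hypHs; move: jL; case: j => //= j; lia.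
move=> U iU UW; apply: isoN1 iU (subv_trans UW _).
rewrite big_nat; apply: (big_ind (fun X => X <= N1)%VS) => [|X Y|j jL]; rewrite ?sub0v //.
  by move=> XN YN; rewrite subv_add XN YN.
rewrite HsW; last by move: jL; rewrite ltnS.
by rewrite -sumHs; apply: nth_subv_sum; move: jL; case: j => //= j; lia.
Qed.
End SymmetricFormDecomposition.

Lemma linfun_linearE (R : fieldType) (aT rT : vectType R) (f : aT -> rT) :
  (forall a u v, f (a *: u + v) = a *: f u + f v) -> linfun f =1 f.
Proof.
move=> f_lin; pose g : {linear aT -> rT} := HB.pack f (GRing.isLinear.Build _ _ _ _ f f_lin).
exact: (lfunE g).
Qed.

Section SymmetricDifference.
Variable T : finType.
Implicit Types A B : {set T}.

Lemma symdC A B : symd A B = symd B A.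
Proof. by rewrite /symd setUC. Qed.

Lemma symdK A B : symd (symd A B) B = A.
Proof. by apply/setP => x; rewrite !inE; case: (x \in A); case: (x \in B). Qed.

Lemma symdd A : symd A A = set0.
Proof. by rewrite /symd setDv setU0. Qed.

Lemma symd_diff A (P : {set T}) : P \subset A -> symd P (A :\: P) = A.
Proof.
move=> /subsetP PA; apply/setP => x; rewrite !inE.
by case xP: (x \in P); [rewrite PA | case: (x \in A)].
Qed.

Lemma symd_set1 (a c : T) : a != c -> symd [set a] [set c] = [set a; c].
Proof.
move=> ac; apply/setP => x; rewrite !inE.
by have [->|] := eqVneq x a; [rewrite ac | case: (x == c)].
Qed.

Lemma even_symd A B : even_set A -> even_set B -> even_set (symd A B).
Proof.
rewrite /even_set /symd cardsU -(cardsID B A) -(cardsID A B) setIC.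
have -> : (A :\: B) :&: (B :\: A) = set0.
  by apply/setP => x; rewrite !inE; case: (x \in A); case: (x \in B).
rewrite cards0 subn0 !oddD.
by case: (odd #|B :&: A|); case: (odd #|A :\: B|); case: (odd #|B :\: A|).
Qed.

Lemma even_set0 : even_set (set0 : {set T}).
Proof. by rewrite /even_set cards0. Qed.

Lemma even_set2 (a c : T) : a != c -> even_set [set a; c].
Proof. by move=> ac; rewrite /even_set cards2 ac. Qed.

End SymmetricDifference.

Section CliffordSign.
Variables (R : fieldType) (n p : nat).
Implicit Types A B : {set 'I_n}.

Lemma eps_neq0 (i : 'I_n) : eps p i != 0 :> R.
Proof. by rewrite /eps; case: ifP => _; rewrite ?oppr_eq0 oner_eq0. Qed.

Lemma eps_sqr (i : 'I_n) : eps p i * eps p i = 1 :> R.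
Proof. by rewrite /eps; case: ifP => _; rewrite ?mulrNN mulr1. Qed.

Lemma clsign_neq0 A B : clsign p A B != 0 :> R.
Proof.
rewrite /clsign mulf_neq0 ?signr_eq0 //.
by apply/prodf_neq0 => i _; rewrite oppr_eq0 eps_neq0.
Qed.

Lemma clsign_sorted A B : (forall x y, x \in A -> y \in B -> (x < y)%N) ->
  clsign p A B = 1 :> R.
Proof.
move=> AB; rewrite /clsign.
have -> : [set ab : 'I_n * 'I_n | (ab.1 \in A) && (ab.2 \in B) && (ab.2 < ab.1)%N] = set0.
  apply/setP => -[x y]; rewrite !inE /=; apply/negP => /andP[/andP[xA yB]].
  by rewrite ltnNge ltnW ?AB.
have -> : A :&: B = set0.
  by apply/setP => x; rewrite !inE; apply/negP => /andP[xA /(AB x x xA)]; rewrite ltnn.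
by rewrite cards0 expr0 big_set0 mulr1.
Qed.

Lemma clsign_antisorted A B : (forall x y, x \in A -> y \in B -> (y < x)%N) ->
  clsign p A B = (-1) ^+ (#|A| * #|B|) :> R.
Proof.
move=> BA; rewrite /clsign.
have -> : [set ab : 'I_n * 'I_n | (ab.1 \in A) && (ab.2 \in B) && (ab.2 < ab.1)%N] =
          setX A B.
  apply/setP => -[x y]; rewrite !inE /=.
  by case xA: (x \in A); case yB: (y \in B); rewrite //= BA.
have -> : A :&: B = set0.
  by apply/setP => x; rewrite !inE; apply/negP => /andP[xA /(BA x x xA)]; rewrite ltnn.
by rewrite cardsX big_set0 mulr1.
Qed.

Lemma clsign_set2_sqr (a c : 'I_n) : (a < c)%N ->
  clsign p [set a; c] [set a; c] = - (eps p a * eps p c) :> R.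
Proof.
move=> ac; rewrite /clsign.
have -> : [set ab : 'I_n * 'I_n | (ab.1 \in [set a; c]) && (ab.2 \in [set a; c]) &&
           (ab.2 < ab.1)%N] = [set (c, a)].
  by apply/setP => -[x y]; rewrite !inE xpair_eqE -!val_eqE /=; apply/idP/idP; lia.
have a_c : a \notin [set c] by rewrite inE -val_eqE /=; lia.
by rewrite cards1 expr1 setIid big_setU1 //= big_set1 mulrNN mulN1r.
Qed.

End CliffordSign.

Section CliffordModuleMap.
Variables (R : numFieldType) (n p : nat) (vT : vectType R).
Variable rho : {set 'I_n} -> vT -> vT.
Hypothesis rho_module : is_Cl0_module p rho.
Implicit Types (A B : {set 'I_n}) (U M : {vspace vT}).

Lemma rho_linear A : even_set A -> forall a u v, rho A (a *: u + v) = a *: rho A u + rho A v.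
Proof. by case: rho_module => lin _ _; apply: lin. Qed.

Lemma rho_set0 v : rho set0 v = v.
Proof. by case: rho_module => _ id _; apply: id. Qed.

Lemma rho_mul A B : even_set A -> even_set B -> forall v,
  rho A (rho B v) = clsign p A B *: rho (symd A B) v.
Proof. by case: rho_module => _ _ mul; apply: mul. Qed.

Lemma rho_sqr A v : even_set A -> rho A (rho A v) = clsign p A A *: v.
Proof. by move=> eA; rewrite rho_mul // symdd rho_set0. Qed.

Lemma rho0 A : even_set A -> rho A 0 = 0.
Proof.
move=> eA; have := rho_linear eA 1 0 0; rewrite !scale1r addr0 => h.
by apply: (addrI (rho A 0)); rewrite addr0 -h.
Qed.

Lemma rhoD A : even_set A -> {morph rho A : u v / u + v}.
Proof. by move=> eA u v; rewrite -[u]scale1r rho_linear // !scale1r. Qed.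

Lemma rhoZ A : even_set A -> forall a u, rho A (a *: u) = a *: rho A u.
Proof. by move=> eA a u; rewrite -[_ *: u]addr0 rho_linear // rho0 // addr0. Qed.

Lemma rho_sum A I (r : seq I) (P : pred I) (F : I -> vT) : even_set A ->
  rho A (\sum_(i <- r | P i) F i) = \sum_(i <- r | P i) rho A (F i).
Proof. by move=> eA; apply: (big_morph (rho A) (rhoD eA) (rho0 eA)). Qed.

Let N_even := #|[pred A : {set 'I_n} | even_set A]|.

Lemma N_even_neq0 : (N_even%:R : R) != 0.
Proof. by rewrite pnatr_eq0 -lt0n; apply/card_gt0P; exists set0; rewrite inE even_set0. Qed.

(* Maschke averaging of projv U over the basis e_A of Cl^0(V), using that
   (clsign A A)^-1 e_A is the inverse of e_A. *)
Definition avg_proj U (x : vT) : vT :=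
  N_even%:R^-1 *: \sum_(A | even_set A) (clsign p A A)^-1 *: rho A (projv U (rho A x)).

Lemma avg_proj_linear U a u v :
  avg_proj U (a *: u + v) = a *: avg_proj U u + avg_proj U v.
Proof.
rewrite /avg_proj scalerA mulrC -scalerA -scalerDr; congr (_ *: _).
rewrite scaler_sumr -big_split /=; apply: eq_bigr => A eA.
by rewrite rho_linear // linearP rho_linear // scalerDr !scalerA mulrC.
Qed.

Lemma avg_proj_mem U x : submodule rho U -> avg_proj U x \in U.
Proof.
move=> sU; rewrite memvZ // memv_suml // => A eA.
by rewrite memvZ // sU // memv_proj.
Qed.

Lemma avg_proj_id U u : submodule rho U -> u \in U -> avg_proj U u = u.
Proof.
move=> sU uU; rewrite /avg_proj (eq_bigr (fun _ => u)) => [|A eA]; last first.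
  by rewrite projv_id ?sU // rho_sqr // scalerA mulVf ?scale1r // clsign_neq0.
by rewrite sumr_const -scaler_nat scalerA mulVf ?scale1r // N_even_neq0.
Qed.

(* Reindexing A -> A symd B shows that avg_proj U commutes with every e_B. *)
Lemma avg_proj_rho U B x : even_set B -> avg_proj U (rho B x) = rho B (avg_proj U x).
Proof.
move=> eB; rewrite /avg_proj rhoZ // rho_sum //; congr (_ *: _).
have term A : even_set A ->
    (clsign p A A)^-1 *: rho A (projv U (rho A (rho B x))) =
    rho B ((clsign p (symd A B) (symd A B))^-1 *: rho (symd A B)
             (projv U (rho (symd A B) x))).
  move=> eA; set A' := symd A B; have eA' : even_set A' by apply: even_symd.
  set y := projv U (rho A' x); set z := (clsign p A' A')^-1 *: rho A' y.
  have zy : rho A (rho B z) = clsign p A B *: y.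
    by rewrite rho_mul // -/A' rhoZ // rho_sqr // !scalerA mulfVK ?clsign_neq0.
  rewrite rho_mul // -/A' linearZ /= -/y -zy rho_sqr ?rhoZ // scalerA mulVf ?scale1r //.
  exact: clsign_neq0.
have symdB_inj : injective (symd^~ B) by apply: inv_inj => A; apply: symdK.
rewrite (eq_bigr _ term) [RHS](reindex_inj symdB_inj) /=.
apply: eq_bigl => A; apply/idP/idP => eA; first exact: even_symd.
by rewrite -(symdK A B) even_symd.
Qed.

Lemma submodule_complement U M : submodule rho U -> submodule rho M -> (U <= M)%VS ->
  exists U', [/\ submodule rho U', (U + U')%VS = M & (U :&: U')%VS = 0%VS].
Proof.
move=> sU sM UM; set Q := linfun (avg_proj U).
have QE := linfun_linearE (avg_proj_linear U) : Q =1 avg_proj U.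
exists (M :&: lker Q)%VS; split.
- move=> B eB x /memv_capP[xM]; rewrite !memv_ker !QE => /eqP Qx.
  by rewrite memv_cap sM // memv_ker QE avg_proj_rho // Qx rho0 ?eqxx.
- apply/eqP; rewrite eqEsubv subv_add UM capvSl /=; apply/subvP => m mM.
  rewrite -(subrK (avg_proj U m) m) addrC memv_add ?avg_proj_mem //.
  rewrite memv_cap memv_ker linearB /= !QE (avg_proj_id sU (avg_proj_mem m sU)) subrr eqxx.
  by rewrite memvB // (subvP UM) ?avg_proj_mem.
- apply/eqP; rewrite -subv0; apply/subvP => x /memv_capP[xU /memv_capP[_]].
  by rewrite memv_ker QE avg_proj_id // memv0.
Qed.

Variable Pi : vT -> vT -> 'rV[R]_n.
Hypothesis Pi_equivariant : is_equivariant_Pi p rho Pi.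

Lemma Pi_linearl a s s' t : Pi (a *: s + s') t = a *: Pi s t + Pi s' t.
Proof. by case: Pi_equivariant => lin _ _ _; apply: lin. Qed.

Lemma Pi_linearr a s t t' : Pi s (a *: t + t') = a *: Pi s t + Pi s t'.
Proof. by case: Pi_equivariant => _ lin _ _; apply: lin. Qed.

Lemma Pi_equiv x y s t :
  Pi (spin_act p rho x y s) t + Pi s (spin_act p rho x y t) = oV_act p x y (Pi s t).
Proof. by case: Pi_equivariant => _ _ _ equiv; apply: equiv. Qed.

Lemma Pi0l t : Pi 0 t = 0.
Proof.
have := Pi_linearl 1 0 0 t; rewrite !scale1r addr0 => h.
by apply: (addrI (Pi 0 t)); rewrite addr0 -h.
Qed.

Lemma Pi0r s : Pi s 0 = 0.
Proof.
have := Pi_linearr 1 s 0 0; rewrite !scale1r addr0 => h.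
by apply: (addrI (Pi s 0)); rewrite addr0 -h.
Qed.

Lemma PiDl s s' t : Pi (s + s') t = Pi s t + Pi s' t.
Proof. by have := Pi_linearl 1 s s' t; rewrite !scale1r. Qed.

Lemma PiDr s t t' : Pi s (t + t') = Pi s t + Pi s t'.
Proof. by have := Pi_linearr 1 s t t'; rewrite !scale1r. Qed.

Lemma PiZl a s t : Pi (a *: s) t = a *: Pi s t.
Proof. by rewrite -[a *: s]addr0 Pi_linearl Pi0l addr0. Qed.

Lemma PiZr a s t : Pi s (a *: t) = a *: Pi s t.
Proof. by rewrite -[a *: t]addr0 Pi_linearr Pi0r addr0. Qed.

Lemma Pi_skew s t : Pi s t = - Pi t s.
Proof.
have [_ _ alt _] := Pi_equivariant.
have := alt (s + t); rewrite PiDl !PiDr !alt add0r addr0 => /eqP.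
by rewrite addr_eq0 => /eqP.
Qed.

Lemma erowE (k j : 'I_n) : ('e_k : 'rV[R]_n) 0 j = (j == k)%:R.
Proof. by rewrite mxE eqxx. Qed.

Lemma ip_erow k (z : 'rV[R]_n) : ip p 'e_k z = eps p k * z 0 k.
Proof.
rewrite /ip (bigD1 k) //= big1 ?addr0 => [|i ik]; first by rewrite erowE eqxx mulr1.
by rewrite erowE (negbTE ik) mulr0 mul0r.
Qed.

Lemma oV_act_erow (a c : 'I_n) (z : 'rV[R]_n) : oV_act p 'e_a 'e_c z =
  (eps p c * z 0 c) *: 'e_a - (eps p a * z 0 a) *: 'e_c.
Proof. by rewrite /oV_act !ip_erow. Qed.

Lemma sum_erow2 (a c : 'I_n) (F : 'I_n -> 'I_n -> vT) :
  \sum_(i < n) \sum_(j < n) (('e_a : 'rV[R]_n) 0 i * ('e_c : 'rV[R]_n) 0 j) *: F i j =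
  F a c.
Proof.
have others_i : \sum_(i < n | i != a) \sum_(j < n)
    (('e_a : 'rV[R]_n) 0 i * ('e_c : 'rV[R]_n) 0 j) *: F i j = 0.
  by apply: big1 => i ia; apply: big1 => j _; rewrite erowE (negbTE ia) mul0r scale0r.
have others_j : \sum_(j < n | j != c)
    (('e_a : 'rV[R]_n) 0 a * ('e_c : 'rV[R]_n) 0 j) *: F a j = 0.
  by apply: big1 => j jc; rewrite !erowE (negbTE jc) mulr0 scale0r.
rewrite (bigD1 a) //= others_i addr0 (bigD1 c) //= others_j addr0.
by rewrite !erowE !eqxx mulr1 scale1r.
Qed.

Lemma spin_act_erow (a c : 'I_n) s : (a < c)%N ->
  spin_act p rho 'e_a 'e_c s = - 2^-1 *: rho [set a; c] s.
Proof.
move=> ac; have a_c : a != c by rewrite neq_ltn ac.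
have sortac : clsign p [set a] [set c] = 1 :> R.
  by apply: clsign_sorted => x y; rewrite !inE => /eqP-> /eqP->.
have sortca : clsign p [set c] [set a] = -1 :> R.
  by rewrite clsign_antisorted ?cards1 // => x y; rewrite !inE => /eqP-> /eqP->.
rewrite /spin_act sum_erow2 /cl2 sortac sortca symd_set1 // symd_set1 1?eq_sym //.
rewrite setUC scale1r scaleN1r opprK -mulr2n -scaler_nat scalerA; congr (_ *: _).
have -> : 4%:R = 2 * 2 :> R by rewrite -natrM.
have two_neq0 : (2 : R) != 0 by rewrite pnatr_eq0.
by field.
Qed.

Lemma Pi_rho_set2 (a c : 'I_n) s t : (a < c)%N ->
  Pi (rho [set a; c] s) t + Pi s (rho [set a; c] t) =
  (-2) *: oV_act p 'e_a 'e_c (Pi s t).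
Proof.
move=> ac; rewrite -Pi_equiv !spin_act_erow // PiZl PiZr -scalerDr scalerA.
suff -> : (-2) * - 2^-1 = 1 :> R by rewrite scale1r.
by rewrite mulrNN divff // pnatr_eq0.
Qed.

Lemma Pi_rho_set2_coord (a c k : 'I_n) s t : (a < c)%N ->
  Pi (rho [set a; c] s) t 0 k + Pi s (rho [set a; c] t) 0 k =
  -2 * (eps p c * Pi s t 0 c * (k == a)%:R - eps p a * Pi s t 0 a * (k == c)%:R).
Proof.
move=> ac; have := congr1 (fun v : 'rV[R]_n => v 0 k) (Pi_rho_set2 s t ac).
by rewrite /= oV_act_erow !mxE.
Qed.

Lemma Pi_rho_set2_coord_skew (a c k : 'I_n) s t : (a < c)%N -> k != a -> k != c ->
  Pi (rho [set a; c] s) t 0 k = - Pi s (rho [set a; c] t) 0 k.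
Proof.
move=> ac ka kc; apply/eqP; rewrite -addr_eq0 Pi_rho_set2_coord //.
by rewrite (negbTE ka) (negbTE kc) !mulr0 subrr mulr0.
Qed.

Variable i0 : 'I_n.
Hypotheses (i0E : val i0 = 0%N) (p_gt0 : (0 < p)%N).

Lemma eps_first : eps p i0 = 1 :> R.
Proof. by rewrite /eps i0E p_gt0. Qed.

Definition Pi_first s t := Pi s t 0 i0.

Lemma Pi_firstZl a s t : Pi_first (a *: s) t = a * Pi_first s t.
Proof. by rewrite /Pi_first PiZl mxE. Qed.

Lemma Pi_firstZr a s t : Pi_first s (a *: t) = a * Pi_first s t.
Proof. by rewrite /Pi_first PiZr mxE. Qed.

(* With P = e_0 e_c and e = eps c, P^2 = -e; the equivariance relations in
   coordinates 0 and c give Pi_first (P u) (P v) = - e * Pi_first u v,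
   which is the claim for v := P t. *)
Lemma Pi_first_adj_first_pair (c : 'I_n) s t : (0 < c)%N ->
  Pi_first (rho [set i0; c] s) t = Pi_first s (rho [set i0; c] t).
Proof.
move=> c_gt0; have i0c : (i0 < c)%N by rewrite i0E.
have c_i0 : c != i0 by rewrite neq_ltn i0c orbT.
set P := [set i0; c]; set e := eps p c : R.
have eP : even_set P by rewrite even_set2 // eq_sym.
have PP v : rho P (rho P v) = - e *: v.
  by rewrite rho_sqr // clsign_set2_sqr // eps_first mul1r.
have coord0 u v : Pi_first (rho P u) v + Pi_first u (rho P v) = -2 * e * Pi u v 0 c.
  rewrite /Pi_first Pi_rho_set2_coord // eqxx eq_sym (negbTE c_i0) eps_first /=.
  rewrite -/e; ring.
have coordc u v : Pi (rho P u) v 0 c + Pi u (rho P v) 0 c = 2 * Pi_first u v.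
  rewrite /Pi_first Pi_rho_set2_coord // eqxx (negbTE c_i0) eps_first /= -/e; ring.
have PuPv u v : Pi_first (rho P u) (rho P v) = - e * Pi_first u v.
  have h1 := coord0 (rho P u) v; have h2 := coord0 u (rho P v).
  rewrite PP Pi_firstZl in h1; rewrite PP Pi_firstZr in h2.
  have hc := coordc u v.
  set X := Pi_first u v in h1 h2 hc *; set Y := Pi_first _ (rho P v) in h1 h2 *.
  have two_neq0 : (2 : R) != 0 by rewrite pnatr_eq0.
  apply: (mulfI two_neq0).
  have -> : 2 * Y = (- e * X + Y) + (Y + - e * X) + e * (2 * X) by ring.
  have -> : 2 * (- e * X) = - e * (2 * X) by ring.
  by rewrite -hc h1 h2; ring.
have := PuPv s (rho P t); rewrite PP Pi_firstZr => /mulfI.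
by apply; rewrite oppr_eq0 eps_neq0.
Qed.

Lemma Pi_coord_first (c : 'I_n) s t : (0 < c)%N ->
  Pi s t 0 c = - eps p c * Pi_first (rho [set i0; c] s) t.
Proof.
move=> c_gt0; have i0c : (i0 < c)%N by rewrite i0E.
have c_i0 : c != i0 by rewrite neq_ltn i0c orbT.
have := Pi_rho_set2_coord i0 s t i0c; rewrite eqxx eq_sym (negbTE c_i0) eps_first /=.
rewrite -!/(Pi_first _ _) -Pi_first_adj_first_pair //.
set e := eps p c : R; set X := Pi_first _ t; set Y := Pi s t 0 c => XX.
have two_neq0 : (2 : R) != 0 by rewrite pnatr_eq0.
have -> : Y = - e * (- e * Y) by rewrite mulrA mulrNN eps_sqr mul1r.
congr (_ * _); apply: (mulfI two_neq0).
have -> : 2 * X = X + X by ring.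
by rewrite XX; ring.
Qed.

Definition block (a k : nat) : {set 'I_n} := [set j : 'I_n | (a <= j < a + k.*2)%N].

(* Peel off the first pair {a, a+1}: by Pi_rho_set2_coord_skew each pair
   e_a e_(a+1) away from index 0 is skew-adjoint for Pi_first. *)
Lemma Pi_first_adj_block k a : (0 < a)%N -> (a + k.*2 <= n)%N ->
  even_set (block a k) /\
  forall x t, Pi_first (rho (block a k) x) t = (-1) ^+ k * Pi_first x (rho (block a k) t).
Proof.
elim: k a => [|k IH] a a_gt0 akn.
  have -> : block a 0 = set0 by apply/setP => j; rewrite !inE addn0; lia.
  by split=> [|x t]; rewrite ?even_set0 // !rho_set0 expr0 mul1r.
have a2kn : (a.+2 + k.*2 <= n)%N by move: akn; rewrite doubleS; lia.
have [eB' adjB'] := IH a.+2 isT a2kn.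
have an : (a < n)%N by lia.
have a1n : (a.+1 < n)%N by lia.
pose ia := Ordinal an; pose ib := Ordinal a1n.
have iab : (ia < ib)%N by [].
set P := [set ia; ib]; set B' := block a.+2 k.
have eP : even_set P by rewrite even_set2 // neq_ltn iab.
have B_P : block a k.+1 = symd P B'.
  by apply/setP => j; rewrite !inE -!val_eqE /=; apply/idP/idP; lia.
have PB' : clsign p P B' = 1 :> R.
  by apply: clsign_sorted => x y; rewrite !inE -!val_eqE /=; lia.
have B'P : clsign p B' P = 1 :> R.
  rewrite clsign_antisorted => [|x y]; last by rewrite !inE -!val_eqE /=; lia.
  by rewrite cards2 neq_ltn iab mulnC exprM sqrrN !expr1n.
have rhoPB' v : rho (block a k.+1) v = rho P (rho B' v).
  by rewrite rho_mul // PB' scale1r B_P.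
have rhoB'P v : rho (block a k.+1) v = rho B' (rho P v).
  by rewrite rho_mul // B'P scale1r B_P symdC.
split=> [|x t]; first by rewrite B_P even_symd.
rewrite rhoPB' rhoB'P /Pi_first (Pi_rho_set2_coord_skew (k := i0) _ _ iab); last 2 first.
- by rewrite -val_eqE /= i0E; lia.
- by rewrite -val_eqE /= i0E.
by rewrite -/(Pi_first _ _) adjB' /Pi_first exprS; ring.
Qed.

Variable p' : nat.
Hypotheses (p'_mod4 : (p' %% 4 = 3)%N) (p'_le_n : (p' <= n)%N).

Definition Fset : {set 'I_n} := [set j : 'I_n | (0 < j < p')%N].

(* Fset = {1, ..., p'-1} consists of (p'-1)/2 pairs, an odd number since
   p' = 3 mod 4: rho Fset is skew-adjoint for Pi_first. *)
Lemma Fset_even_skew : even_set Fset /\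
  forall x t, Pi_first (rho Fset x) t = - Pi_first x (rho Fset t).
Proof.
have [k [p'k k_odd]] : exists k, p' = 1 + k.*2 /\ odd k.
  by exists (p' %/ 4).*2.+1; split; [lia | rewrite /= odd_double].
have -> : Fset = block 1 k by apply/setP => j; rewrite !inE; lia.
have kn : (1 + k.*2 <= n)%N by lia.
have [eB adjB] := Pi_first_adj_block (a := 1) isT kn.
by split=> // x t; rewrite adjB -signr_odd k_odd expr1 mulN1r.
Qed.

Local Notation bb := (bform p' p rho Pi).

Lemma even_Fset : even_set Fset. Proof. by case: Fset_even_skew. Qed.

Lemma bformE s t : bb s t = Pi_first (rho Fset s) t.
Proof.
rewrite /bform.
have -> : (e_first : 'rV[R]_n) = 'e_i0 by apply/rowP => j; rewrite erowE mxE -val_eqE i0E.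
by rewrite ip_erow eps_first mul1r.
Qed.

Lemma bform_linearl a s s' t : bb (a *: s + s') t = a * bb s t + bb s' t.
Proof. by rewrite !bformE rho_linear ?even_Fset // /Pi_first Pi_linearl !mxE. Qed.

Lemma bformZl a s t : bb (a *: s) t = a * bb s t.
Proof. by rewrite !bformE rhoZ ?even_Fset // Pi_firstZl. Qed.

Lemma bformZr a s t : bb s (a *: t) = a * bb s t.
Proof. by rewrite !bformE Pi_firstZr. Qed.

Lemma bform_sym s t : bb s t = bb t s.
Proof.
rewrite !bformE /Pi_first (Pi_skew (rho Fset t)) mxE -!/(Pi_first _ _).
by rewrite (proj2 Fset_even_skew).
Qed.

Lemma bform_adj_set2 (x y : 'I_n) : x != y ->
  exists nu, forall s t, bb s (rho [set x; y] t) = nu * bb (rho [set x; y] s) t.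
Proof.
wlog xy : x y / (x < y)%N.
  move=> sorted x_y; have [xy|yx|/val_inj xy] := ltngtP x y.
  - exact: sorted xy x_y.
  - by rewrite setUC; apply: sorted yx _; rewrite eq_sym.
  - by rewrite xy eqxx in x_y.
move=> _; set P := [set x; y]; have eP : even_set P by rewrite even_set2 // neq_ltn xy.
have [sig [sig_neq0 adjP]] : exists sig : R,
    sig != 0 /\ forall u v, Pi_first (rho P u) v = sig * Pi_first u (rho P v).
  have [x0|x_gt0] := posnP x.
    exists 1; split=> [|u v]; rewrite ?oner_neq0 // mul1r.
    rewrite /P (_ : x = i0); last by apply: val_inj; rewrite /= x0 i0E.
    by apply: Pi_first_adj_first_pair; rewrite -x0.
  exists (-1); split=> [|u v]; rewrite ?oppr_eq0 ?oner_neq0 // mulN1r.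
  by apply: Pi_rho_set2_coord_skew; rewrite // -val_eqE /= i0E; lia.
set kap : R := clsign p Fset P / clsign p P Fset.
have kap_neq0 : kap != 0 by rewrite mulf_neq0 ?invr_eq0 ?clsign_neq0.
have FP v : rho Fset (rho P v) = kap *: rho P (rho Fset v).
  rewrite rho_mul ?even_Fset // [in RHS]rho_mul ?even_Fset // symdC scalerA mulfVK //.
  exact: clsign_neq0.
exists (kap * sig)^-1 => s t.
by rewrite !bformE FP Pi_firstZl adjP (mulrA kap) mulKf // mulf_neq0.
Qed.

Lemma bform_adj A : even_set A ->
  exists nu, forall s t, bb s (rho A t) = nu * bb (rho A s) t.
Proof.
have [k] := ubnP #|A|; elim: k A => // k IH A ltAk eA.
have [->|[x xA]] := set_0Vmem A; first by exists 1 => s t; rewrite !rho_set0 mul1r.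
have [y yAx] : exists y, y \in A :\ x.
  apply/card_gt0P; move: eA; rewrite /even_set (cardsD1 x A) xA.
  by case: #|A :\ x|.
move: yAx; rewrite !inE => /andP[y_x yA].
set P := [set x; y]; set A' := A :\: P.
have PA : P \subset A by apply/subsetP => z; rewrite !inE => /orP[] /eqP ->.
have eP : even_set P by rewrite even_set2 // eq_sym.
have cardA : #|A| = (#|A'| + 2)%N.
  by rewrite -(cardsID P A) addnC (setIidPr PA) cards2 eq_sym y_x.
have eA' : even_set A' by move: eA; rewrite /even_set cardA oddD addbF.
have ltA'k : (#|A'| < k)%N by move: ltAk; rewrite cardA; lia.
have [nu' adjA'] := IH A' ltA'k eA'.
have [nuP adjP] : exists nu, forall s t, bb s (rho P t) = nu * bb (rho P s) t.
  by apply: bform_adj_set2; rewrite eq_sym.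
have PA' v : rho P (rho A' v) = clsign p P A' *: rho A v by rewrite rho_mul // symd_diff.
have A'P v : rho A' (rho P v) = clsign p A' P *: rho A v by rewrite rho_mul // symdC symd_diff.
have cPA'_neq0 : clsign p P A' != 0 :> R by apply: clsign_neq0.
exists ((clsign p P A')^-1 * nuP * nu' * clsign p A' P) => s t.
have -> : rho A t = (clsign p P A')^-1 *: rho P (rho A' t).
  by rewrite PA' scalerA mulVf // scale1r.
by rewrite bformZr adjP adjA' A'P bformZl !mulrA.
Qed.

Lemma bform_linearr a s t t' : bb s (a *: t + t') = a * bb s t + bb s t'.
Proof. by rewrite bform_sym bform_linearl !(bform_sym s). Qed.

Definition bform_symmetric : {symmetric vT} :=
  HB.pack bb
    (bilinear_isBilinear.Build _ _ _ _ _ _ bb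
       (conj (fun t a s s' => bform_linearl a s s' t)
             (fun s a t t' => bform_linearr a s t t')))
    (isHermitianSesquilinear.Build _ _ false idfun bb
       (fun s t => etrans (bform_sym s t) (esym (mul1r _)))).

Lemma Pi_first_eq0_of_orth (U : {vspace vT}) s t : submodule rho U -> s \in U ->
  (forall u, u \in U -> bb u t = 0) -> Pi_first s t = 0.
Proof.
move=> sU sUs orth_t; have cFF_neq0 := @clsign_neq0 R n p Fset Fset.
have := orth_t _ (sU _ even_Fset _ sUs).
rewrite bformE rho_sqr ?even_Fset // Pi_firstZl => /eqP.
by rewrite mulf_eq0 (negbTE cFF_neq0) => /eqP.
Qed.

(* By Pi_coord_first every coordinate of Pi s t is a value Pi_first (e_B s) t
   with e_B s in U, and Pi_first s' t is a nonzero multiple of b (e_Fset s') t. *)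
Lemma Pi_eq0_of_orth (U : {vspace vT}) s t : submodule rho U -> s \in U ->
  (forall u, u \in U -> bb u t = 0) -> Pi s t = 0.
Proof.
move=> sU sUs orth_t; apply/rowP => j; rewrite mxE.
have [j0|j_gt0] := posnP j.
  have -> : j = i0 by apply: val_inj; rewrite /= j0 i0E.
  exact: (Pi_first_eq0_of_orth sU sUs orth_t).
rewrite Pi_coord_first // (Pi_first_eq0_of_orth sU _ orth_t) ?mulr0 //.
by apply: sU => //; rewrite even_set2 // -val_eqE /= i0E; lia.
Qed.

Section PiSpan.
Variable U : {vspace vT}.
Hypothesis sU : submodule rho U.

Definition Pi_span (v : 'rV[R]_n) := exists l : seq (vT * vT),
  (forall x, x \in l -> x.1 \in U /\ x.2 \in U) /\ v = \sum_(x <- l) Pi x.1 x.2.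

Lemma Pi_span0 : Pi_span 0.
Proof. by exists [::]; split => //; rewrite big_nil. Qed.

Lemma Pi_spanD v w : Pi_span v -> Pi_span w -> Pi_span (v + w).
Proof.
move=> [l1 [l1U ->]] [l2 [l2U ->]]; exists (l1 ++ l2); split; last by rewrite big_cat.
by move=> x; rewrite mem_cat => /orP[/l1U|/l2U].
Qed.

Lemma Pi_spanZ a v : Pi_span v -> Pi_span (a *: v).
Proof.
move=> [l [lU ->]]; exists [seq (a *: x.1, x.2) | x <- l]; split.
  by move=> _ /mapP[x /lU[x1U x2U] ->]; rewrite /= memvZ.
by rewrite big_map scaler_sumr; apply: eq_bigr => x _; rewrite PiZl.
Qed.

Lemma Pi_span_sum I (r : seq I) (P : pred I) (F : I -> 'rV[R]_n) :
  (forall i, P i -> Pi_span (F i)) -> Pi_span (\sum_(i <- r | P i) F i).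
Proof. by move=> spanF; apply: big_ind => //; [exact: Pi_span0 | exact: Pi_spanD]. Qed.

Lemma Pi_span_oV (a c : 'I_n) z : (a < c)%N -> Pi_span z -> Pi_span (oV_act p 'e_a 'e_c z).
Proof.
move=> ac [l [lU ->]]; set sp := spin_act p rho 'e_a 'e_c.
have spU u : u \in U -> sp u \in U.
  by move=> uU; rewrite /sp spin_act_erow // memvZ // sU // even_set2 // neq_ltn ac.
exists ([seq (sp x.1, x.2) | x <- l] ++ [seq (x.1, sp x.2) | x <- l]); split.
  by move=> x; rewrite mem_cat => /orP[] /mapP[y /lU[y1U y2U] ->]; rewrite /= spU.
have oV_sum : oV_act p 'e_a 'e_c (\sum_(x <- l) Pi x.1 x.2) =
    \sum_(x <- l) oV_act p 'e_a 'e_c (Pi x.1 x.2).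
  rewrite oV_act_erow !summxE mulr_sumr mulr_sumr !scaler_suml -sumrB.
  by apply: eq_bigr => x _; rewrite oV_act_erow.
rewrite oV_sum big_cat !big_map /= -big_split /=.
by apply: eq_bigr => x _; rewrite -Pi_equiv.
Qed.

(* The square of the action of e_a /\ e_c on V is - eps a * eps c times the
   projection onto the coordinates a and c. *)
Lemma Pi_span_coord2 (a c : 'I_n) z : (a < c)%N -> Pi_span z ->
  Pi_span (z 0 a *: ('e_a : 'rV[R]_n) + z 0 c *: 'e_c).
Proof.
move=> ac spz; have a_c : (a == c) = false by apply/negbTE; rewrite neq_ltn ac.
have -> : z 0 a *: 'e_a + z 0 c *: 'e_c =
    - (eps p a * eps p c) *: oV_act p 'e_a 'e_c (oV_act p 'e_a 'e_c z).
  have ea := @eps_sqr R n p a; have ec := @eps_sqr R n p c.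
  apply/rowP => j; rewrite !oV_act_erow !mxE ?erowE ?a_c ?eqxx /= ?(eq_sym c) ?a_c.
  by case: (j == a); case: (j == c); rewrite /=; ring: ea ec.
by apply/Pi_spanZ/Pi_span_oV/Pi_span_oV.
Qed.

Hypothesis n_ge3 : (3 <= n)%N.

(* From z = Pi (e_Fset s) t with z_0 = b s t != 0, two coordinate projections
   isolate a multiple of e_0, and the action of e_0 /\ e_j moves e_0 to e_j. *)
Lemma Pi_span_all s t : s \in U -> t \in U -> bb s t != 0 -> forall v, Pi_span v.
Proof.
move=> sU' tU bst_neq0 v.
have n1 : (1 < n)%N by lia.
have n2 : (2 < n)%N by lia.
pose i1 := Ordinal n1; pose i2 := Ordinal n2.
have i01 : (i0 < i1)%N by rewrite i0E.
have i02 : (i0 < i2)%N by rewrite i0E.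
set z := Pi (rho Fset s) t.
have spz : Pi_span z.
  exists [:: (rho Fset s, t)]; split; last by rewrite big_seq1.
  by move=> x; rewrite inE => /eqP -> /=; rewrite sU // even_Fset.
have z0 : z 0 i0 = bb s t by rewrite bformE.
have := Pi_span_coord2 i02 (Pi_span_coord2 i01 spz).
rewrite !mxE !eqxx -!val_eqE /= i0E /= mulr0 mulr1 !addr0 mulr0 scale0r addr0.
rewrite z0 => /(Pi_spanZ (bb s t)^-1); rewrite scalerA mulVf // scale1r => spe0.
rewrite (row_sum_delta v); apply: Pi_span_sum => j _; apply: Pi_spanZ.
have [j0|j_gt0] := posnP j.
  by rewrite (_ : j = i0) //; apply: val_inj; rewrite /= j0 i0E.
have i0j : (i0 < j)%N by rewrite i0E.
have := Pi_spanZ (-1) (Pi_span_oV i0j spe0); congr Pi_span.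
rewrite oV_act_erow !erowE eqxx eps_first mul1r scale1r.
have -> : (j == i0) = false by apply/negbTE; rewrite -val_eqE /= i0E -lt0n.
by rewrite mulr0 scale0r sub0r scaleN1r opprK.
Qed.

End PiSpan.

Lemma Pi_onto (U : {vspace vT}) : submodule rho U -> (3 <= n)%N -> U != 0%VS ->
  (forall s, s \in U -> (forall t, t \in U -> bb s t = 0) -> s = 0) ->
  forall v : 'rV[R]_n, exists k (ss ts : 'I_k -> vT),
    (forall r, ss r \in U /\ ts r \in U) /\ v = \sum_(r < k) Pi (ss r) (ts r).
Proof.
move=> sU n_ge3 nzU ndU v.
have [t tU bt] : exists2 t, t \in U & bb (vpick U) t != 0.
  apply: NNPP => no_t; move: nzU; rewrite -vpick0 => /eqP[].
  apply: (ndU _ (memv_pick _)) => t tU; apply/eqP; apply: contraT => bt.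
  by case: no_t; exists t.
have [l [lU ->]] := Pi_span_all sU n_ge3 (memv_pick U) tU bt v.
exists (size l), (fun r => (nth (0, 0) l r).1), (fun r => (nth (0, 0) l r).2).
by split=> [r|]; [apply: lU; apply: mem_nth | rewrite (big_nth (0, 0)) big_mkord].
Qed.
End CliffordModuleMap.

Theorem mainTheorem3 (R : realType) (p' p'' q : nat) (vT : vectType R)
  (rho : {set 'I_(p' + p'' + q)} -> vT -> vT)
  (Pi : vT -> vT -> 'rV[R]_(p' + p'' + q)) :
  (p' %% 4 = 3)%N ->
  is_Cl0_module (p' + p'') rho ->
  is_equivariant_Pi (p' + p'') rho Pi ->
  let b := bform p' (p' + p'') rho Pi in
  exists (l m : nat) (W : nat -> {vspace vT}),
    (* b-orthogonal direct sum decomposition into submodules *)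
    [/\ (\sum_(i < (l + m).+1) W i)%VS = fullv,
        directv (\sum_(i < (l + m).+1) W i),
        (forall i, (i <= l + m)%N -> submodule rho (W i)) &
        (forall i j, (i <= l + m)%N -> (j <= l + m)%N -> i != j ->
           forall s t, s \in W i -> t \in W j -> b s t = 0)] /\
    (* (1) *)
    [/\ (forall s t, s \in W 0%N -> Pi s t = 0),
        (forall i j, (i <= l + m)%N -> (j <= l + m)%N -> i != j ->
           forall s t, s \in W i -> t \in W j -> Pi s t = 0) &
        (forall i, (1 <= i <= l)%N -> forall v : 'rV[R]_(p' + p'' + q),
           exists k (ss ts : 'I_k -> vT),
             (forall r, ss r \in W i /\ ts r \in W i) /\
             v = \sum_(r < k) Pi (ss r) (ts r))] /\
    (* (2) *)
    [/\ (forall s, s \in W 0%N <-> (forall t, b s t = 0)) &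
        (forall i, (1 <= i <= l + m)%N -> forall s, s \in W i ->
           (forall t, t \in W i -> b s t = 0) -> s = 0)] /\
    (* (3) *)
    [/\ (forall i, (1 <= i <= l)%N -> irreducible rho (W i)) &
        (forall j, (l < j <= l + m)%N -> exists X X' : {vspace vT},
           [/\ irreducible rho X, irreducible rho X', isotropic b X &
               isotropic b X'] /\ (X + X')%VS = W j /\ (X :&: X')%VS = 0%VS)] /\
    (* (4) *)
    (forall U : {vspace vT}, irreducible rho U ->
       (U <= \sum_(l.+1 <= j < (l + m).+1) W j)%VS -> isotropic b U).
Proof.
move=> p'_mod4 rho_module Pi_equivariant b.
have n_gt0 : (0 < p' + p'' + q)%N by lia.
have i0E : val (Ordinal n_gt0) = 0%N by [].
have p_gt0 : (0 < p' + p'')%N by lia.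
have p'_le_n : (p' <= p' + p'' + q)%N by lia.
have [l [m [W [[sumW dirW subW orthW] [[radW ndW] [[irrW hypW] isoW]]]]]] :=
  orth_module_decomposition
    (b := bform_symmetric rho_module Pi_equivariant i0E p_gt0 p'_mod4 p'_le_n)
    (rhoD rho_module)
    (bform_adj rho_module Pi_equivariant i0E p_gt0 p'_mod4 p'_le_n)
    (submodule_complement rho_module).
have Pi_orth i s t : (i <= l + m)%N -> s \in W i ->
    {in W i, forall u, b u t = 0} -> Pi s t = 0.
  move=> il; apply: (Pi_eq0_of_orth rho_module Pi_equivariant i0E p_gt0 p'_mod4 p'_le_n).
  exact: subW.
exists l, m, W; split; first by split.
split; last by split.
split=> [s t sW | i j il jl ij s t sW tW | i il v].
- exact: (Pi_orth 0%N s t isT sW (fun u uW => proj1 (radW u) uW t)).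
- exact: (Pi_orth i s t il sW (fun u uW => orthW i j il jl ij u t uW tW)).
have ilm : (1 <= i <= l + m)%N by lia.
have [sWi nzWi _] := irrW i il.
have n_ge3 : (3 <= p' + p'' + q)%N by lia.
exact: (Pi_onto rho_module Pi_equivariant i0E p_gt0 p'_mod4 p'_le_n sWi n_ge3 nzWi
          (ndW i ilm) v).
Qed.
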